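(* For every elementary pair $(p,q)$ of partial isomorphisms of $\mathbb{Q}$ there is a triple $(p',q',w)$ that liberates $p$ in $(p,q)$, and there is a triple that liberates $q$ in $(p,q)$.
   Context: A partial isomorphism of $\mathbb{Q}$ is an order-preserving bijection $p$ between finite subsets $\mathrm{dom}(p),\mathrm{ran}(p)$ of $\mathbb{Q}$; $p'\supseteq p$ means $p'$ extends $p$; $\mathrm{Fix}(p)=\{c\in\mathrm{dom}(p):p(c)=c\}$. An open interval $(a,b)$ is $p$-increasing if $a,b\in\mathrm{dom}(p)$, $p(a)=a$, $p(b)=b$ and $p(c)>c$ for all $c\in\mathrm{dom}(p)\cap(a,b)$; $p$-decreasing likewise with $p(c)<c$; $p$-monotone means either. Writing $\mathrm{dom}(p)=\{a_0<\dots<a_n\}$, $p$ is informative if $p(a_0)=a_0$, $p(a_n)=a_n$ and there are indices $0=i_0<\dots<i_r=n$ with $p(a_{i_k})=a_{i_k}$ and each $(a_{i_k},a_{i_{k+1}})$ $p$-monotone; then $\mathrm{Ess}(p)=(\mathrm{dom}(p)\cup\mathrm{ran}(p))\setminus\{a_0,a_n\}$. A pair $(p,q)$ is elementary if $p,q$ are informative, $\min\mathrm{dom}(p)=\min\mathrm{dom}(q)$, $\max\mathrm{dom}(p)=\max\mathrm{dom}(q)$, and $\mathrm{Fix}(p)\cap\mathrm{Fix}(q)$ consists only of this min and max. Words: $F(s,t)$ free group; for reduced $w=t^{n_k}s^{m_k}\cdots t^{n_1}s^{m_1}$, $w(p,q)(c)=q^{n_k}p^{m_k}\cdots q^{n_1}p^{m_1}(c)$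 when defined (rightmost letter acts first); ''$w=t^nv$'' means the product is reduced. Liberation: for an elementary pair $(p,q)$, a triple $(p',q',w)$ with $p'\supseteq p$, $q'\supseteq q$ partial isomorphisms and $w$ reduced liberates $p$ in $(p,q)$ if: (i) $p',q'$ are informative; (ii) $\min\mathrm{dom}(p')=\min\mathrm{dom}(p)$, $\min\mathrm{dom}(q')=\min\mathrm{dom}(q)$, $\max\mathrm{dom}(p')=\max\mathrm{dom}(p)$, $\max\mathrm{dom}(q')=\max\mathrm{dom}(q)$; (iii) $w=t^nv$ with $n\neq0$; (iv) $w(p',q')(c)$ is defined for all $c\in\mathrm{Ess}(p)\cup\mathrm{Ess}(q)$ and $w(p',q')(\min(\mathrm{Ess}(p)\cup\mathrm{Ess}(q)))>\max\mathrm{Ess}(p')$; (v) there is an open interval $J$ whose right endpoint is $\max\mathrm{dom}(q)$, with $w(p',q')(c)\in J$ for all $c\in\mathrm{Ess}(p)\cup\mathrm{Ess}(q)$, and $J$ is $q'$-increasing if $n>0$ and $q'$-decreasing if $n<0$. The triple liberates $q$ in $(p,q)$ if the same holds with the roles of $p,q$ and of $s,t$ interchanged (so $w=s^nv$, $n\ne0$, the bound in (iv) is $>\max\mathrm{Ess}(q')$, and $J$ has right endpoint $\max\mathrm{dom}(p)$ and is $p'$-increasing/decreasing according to the sign of $n$). *)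

From HB Require Import structures.
From mathcomp Require Import all_boot all_order all_algebra.
Set Implicit Arguments. Unset Strict Implicit. Unset Printing Implicit Defensive.
Import Order.TTheory GRing.Theory Num.Theory.
Local Open Scope ring_scope.

(* A partial isomorphism of Q is given by its (finite) graph: a list of pairs
   (c, p(c)).  The condition (x.1 < y.1) = (x.2 < y.2) for all pairs says
   exactly that the graph is that of an order-preserving bijection between
   the finite sets dom and ran (it forces functionality and injectivity). *)
Definition is_pisom (g : seq (rat * rat)) : Prop :=
  forall x y, x \in g -> y \in g -> (x.1 < y.1) = (x.2 < y.2).

Record pisom := PIsom { graph : seq (rat * rat); graphP : is_pisom graph }.

Definition dom (p : pisom) : seq rat := [seq x.1 | x <- graph p].
Definition ran (p : pisom) : seq rat := [seq x.2 | x <- graph p].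

Definition app (p : pisom) (c : rat) : option rat :=
  ohead [seq x.2 | x <- graph p & x.1 == c].
Definition appinv (p : pisom) (c : rat) : option rat :=
  ohead [seq x.1 | x <- graph p & x.2 == c].

Definition extends (p' p : pisom) : Prop := {subset graph p <= graph p'}.

Definition isfix (p : pisom) (c : rat) : Prop := app p c = Some c.

(* min / max of the domain (only meaningful for nonempty domains;
   all partial isomorphisms below to which they are applied are informative,
   hence have nonempty domain) *)
Definition mindom (p : pisom) : rat := foldr Order.min (head 0 (dom p)) (dom p).
Definition maxdom (p : pisom) : rat := foldr Order.max (head 0 (dom p)) (dom p).

Definition p_increasing (p : pisom) (a b : rat) : Prop :=
  [/\ isfix p a, isfix p b &
      forall x, x \in graph p -> a < x.1 < b -> x.1 < x.2].
Definition p_decreasing (p : pisom) (a b : rat) : Prop :=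
  [/\ isfix p a, isfix p b &
      forall x, x \in graph p -> a < x.1 < b -> x.2 < x.1].
Definition p_monotone (p : pisom) (a b : rat) : Prop :=
  p_increasing p a b \/ p_decreasing p a b.

Definition informative (p : pisom) : Prop :=
  [/\ dom p != [::], isfix p (mindom p), isfix p (maxdom p) &
    exists fs : seq rat,
      [/\ fs != [::], sorted <%R fs, head 0 fs = mindom p /\ last 0 fs = maxdom p,
          (forall c, c \in fs -> isfix p c) &
          (forall i, (i.+1 < size fs)%N -> p_monotone p (nth 0 fs i) (nth 0 fs i.+1))]].

Definition Ess (p : pisom) : seq rat :=
  [seq c <- dom p ++ ran p | (c != mindom p) && (c != maxdom p)].

Definition elementary (p q : pisom) : Prop :=
  [/\ informative p, informative q, mindom p = mindom q, maxdom p = maxdom q &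
      forall c, isfix p c -> isfix q c -> c = mindom p \/ c = maxdom p].

(* Words of the free group F(s,t): lists of letters s^{±1}, t^{±1};
   the boolean is true for exponent +1, false for exponent -1. *)
Inductive gen := gs | gt.
Definition letter := (gen * bool)%type.
Definition word := seq letter.

Definition reduced (w : word) : Prop :=
  forall i, (i.+1 < size w)%N ->
    ~ ((nth (gs, true) w i).1 = (nth (gs, true) w i.+1).1 /\
       (nth (gs, true) w i).2 <> (nth (gs, true) w i.+1).2).

Definition act (p q : pisom) (l : letter) (x : rat) : option rat :=
  match l with
  | (gs, true) => app p x
  | (gs, false) => appinv p x
  | (gt, true) => app q x
  | (gt, false) => appinv q x
  end.

(* w(p,q)(c): the rightmost letter acts first; None = undefined *)
Definition eval (p q : pisom) (w : word) (c : rat) : option rat :=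
  foldr (fun l oc => match oc with Some x => act p q l x | None => None end)
        (Some c) w.

(* (p',q',w) liberates p in (p,q).  Writing w = t^n v (reduced), the sign of
   n is the sign of the leftmost letter of w, which is t^{b} (b = true iff n>0). *)
Definition liberates_p (p q p' q' : pisom) (w : word) : Prop :=
  let E := Ess p ++ Ess q in
  [/\ extends p' p /\ extends q' q, reduced w,
      informative p' /\ informative q',
      [/\ mindom p' = mindom p, mindom q' = mindom q,
                     maxdom p' = maxdom p & maxdom q' = maxdom q] &
      exists (b : bool) (v : word), w = (gt, b) :: v /\
      [/\ (forall c, c \in E -> exists d, eval p' q' w c = Some d),
        (forall m, m \in E -> (forall c, c \in E -> m <= c) ->
           forall d, eval p' q' w m = Some d -> forall x, x \in Ess p' -> x < d) &
      exists a : rat,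
        (forall c d, c \in E -> eval p' q' w c = Some d -> a < d < maxdom q) /\
        (if b then p_increasing q' a (maxdom q) else p_decreasing q' a (maxdom q))]].

Definition liberates_q (p q p' q' : pisom) (w : word) : Prop :=
  let E := Ess p ++ Ess q in
  [/\ extends p' p /\ extends q' q, reduced w,
      informative p' /\ informative q',
      [/\ mindom p' = mindom p, mindom q' = mindom q,
          maxdom p' = maxdom p & maxdom q' = maxdom q] &
      exists (b : bool) (v : word), w = (gs, b) :: v /\
      [/\ (forall c, c \in E -> exists d, eval p' q' w c = Some d),
        (forall m, m \in E -> (forall c, c \in E -> m <= c) ->
           forall d, eval p' q' w m = Some d -> forall x, x \in Ess q' -> x < d) &
      exists a : rat,
        (forall c d, c \in E -> eval p' q' w c = Some d -> a < d < maxdom p) /\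
        (if b then p_increasing p' a (maxdom p) else p_decreasing p' a (maxdom p))]].

(* Let m < M be the common endpoints of p and q and x0 the least essential
   point.  We extend p and q one pair at a time, always sending a new point to
   the side prescribed by the monotone interval containing it, and build a
   word along which x0 climbs strictly.  While x0 is not in the last interval
   of q, it lies in a p-interval and a q-interval with distinct right ends
   (m and M are the only common fixed points); the letter of the interval
   with the larger right end carries x0 past the smaller one, unless an
   original point of p or q blocks the way, in which case x0 passes that
   point.  Counting fixed points and original points above x0
   lexicographically shows that this terminates.  In the last interval of q,
   which stays q'-monotone, further powers of t push x0 above all of Ess p'.
   As words act increasingly, every essential point lands above w(x0), inside
   that interval.  The statement for q follows by exchanging s and t. *)

From mathcomp Require Import all_boot all_order all_algebra.
Set Implicit Arguments. Unset Strict Implicit. Unset Printing Implicit Defensive.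
Import Order.TTheory GRing.Theory Num.Theory.
Local Open Scope ring_scope.

Lemma graph_lt (g : pisom) u v :
  u \in graph g -> v \in graph g -> (u.1 < v.1) = (u.2 < v.2).
Proof. exact: graphP. Qed.

Lemma graph_le (g : pisom) u v :
  u \in graph g -> v \in graph g -> (u.1 <= v.1) = (u.2 <= v.2).
Proof. by move=> hu hv; rewrite !leNgt (graph_lt hv hu). Qed.

Lemma graph_eq (g : pisom) u v :
  u \in graph g -> v \in graph g -> (u.1 == v.1) = (u.2 == v.2).
Proof. by move=> hu hv; rewrite !eq_le (graph_le hu hv) (graph_le hv hu). Qed.

Lemma app_graph g c d : app g c = Some d -> (c, d) \in graph g.
Proof.
rewrite /app; case E: [seq _ | _ <- _ & _] => [//|e s] /= [<-].
have : e \in [seq x.2 | x <- graph g & x.1 == c] by rewrite E mem_head.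
by case/mapP=> -[a b]; rewrite mem_filter /= => /andP[/eqP-> ?] ->.
Qed.

Lemma graph_app g c d : (c, d) \in graph g -> app g c = Some d.
Proof.
move=> hcd; case E: (app g c) => [e|].
  by have := graph_eq (app_graph E) hcd; rewrite /= eqxx => /esym/eqP->.
have : d \in [seq x.2 | x <- graph g & x.1 == c].
  by apply/mapP; exists (c, d); rewrite ?mem_filter ?eqxx.
by move: E; rewrite /app; case: [seq _ | _ <- _ & _].
Qed.

Lemma extends_refl g : extends g g.
Proof. by []. Qed.

Lemma app_extends g g' c d : extends g' g -> app g c = Some d -> app g' c = Some d.
Proof. by move=> hg /app_graph /hg /graph_app. Qed.

Definition flip (x : rat * rat) := (x.2, x.1).

Lemma is_pisom_flip (g : pisom) : is_pisom (map flip (graph g)).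
Proof. by move=> _ _ /mapP[u hu ->] /mapP[v hv ->]; rewrite /= (graph_lt hu hv). Qed.

Definition pinv (g : pisom) : pisom := PIsom (@is_pisom_flip g).

Lemma mem_pinv g u : (u \in graph (pinv g)) = (flip u \in graph g).
Proof.
apply/mapP/idP => [[[a b] hv ->] // | h].
by exists (flip u); case: u h.
Qed.

Lemma appinvE g c : appinv g c = app (pinv g) c.
Proof. by rewrite /appinv /app /= filter_map -map_comp. Qed.

Lemma app_pinvK g c : app (pinv (pinv g)) c = app g c.
Proof. by rewrite /app /= -map_comp (@eq_map _ _ _ id) ?map_id // => -[]. Qed.

Lemma app_pinv g a b : app g a = Some b -> app (pinv g) b = Some a.
Proof. by move/app_graph=> h; apply: graph_app; rewrite mem_pinv. Qed.

Lemma pinv_app g a b : app (pinv g) a = Some b -> app g b = Some a.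
Proof. by move/app_pinv; rewrite app_pinvK. Qed.

Lemma extends_pinv g g' : extends g' g -> extends (pinv g') (pinv g).
Proof. by move=> hg u; rewrite !mem_pinv; exact: hg. Qed.

Lemma extends_pinvl g g' : extends g' (pinv g) -> extends (pinv g') g.
Proof. by move=> hg [a b] hab; rewrite mem_pinv; apply: hg; rewrite mem_pinv. Qed.

Lemma isfix_graph g c : isfix g c <-> (c, c) \in graph g.
Proof. by split; [exact: app_graph | exact: graph_app]. Qed.

Lemma isfix_pinv g c : isfix g c -> isfix (pinv g) c.
Proof. by move/isfix_graph=> h; apply/isfix_graph; rewrite mem_pinv. Qed.

Lemma isfix_lt g c u : isfix g c -> u \in graph g ->
  ((c < u.1) = (c < u.2)) /\ ((u.1 < c) = (u.2 < c)).
Proof. by move/isfix_graph=> hc hu; rewrite (graph_lt hc hu) (graph_lt hu hc). Qed.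

Lemma isfix_le g c u : isfix g c -> u \in graph g ->
  ((c <= u.1) = (c <= u.2)) /\ ((u.1 <= c) = (u.2 <= c)).
Proof. by move/isfix_graph=> hc hu; rewrite (graph_le hc hu) (graph_le hu hc). Qed.

Lemma p_increasing_pinv g c d : p_increasing g c d -> p_decreasing (pinv g) c d.
Proof.
case=> hc hd hi; split; try exact: isfix_pinv.
move=> u; rewrite mem_pinv => hu /andP[h1 h2].
have [e1 _] := isfix_lt hc hu; have [_ e2] := isfix_lt hd hu.
by apply: hi hu _; rewrite /= e1 e2 h1 h2.
Qed.

Lemma p_decreasing_pinv g c d : p_decreasing g c d -> p_increasing (pinv g) c d.
Proof.
case=> hc hd hi; split; try exact: isfix_pinv.
move=> u; rewrite mem_pinv => hu /andP[h1 h2].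
have [e1 _] := isfix_lt hc hu; have [_ e2] := isfix_lt hd hu.
by apply: hi hu _; rewrite /= e1 e2 h1 h2.
Qed.

Section FoldrExtrema.
Variables (disp : Order.disp_t) (T : orderType disp).
Implicit Types (a v : T) (s : seq T).
Local Open Scope order_scope.

Lemma foldr_min_mem a s : foldr Order.min a s \in a :: s.
Proof.
elim: s => [|b s IH] /=; first exact: mem_head.
move: IH; rewrite !inE minElt; case: ifP => _; first by rewrite eqxx orbT.
by case/orP=> ->; rewrite ?orbT.
Qed.

Lemma foldr_min_le a s v : v \in a :: s -> foldr Order.min a s <= v.
Proof.
elim: s v => [|b s IH] v /=; first by rewrite inE => /eqP->.
rewrite ge_min !inE => /or3P[/eqP->|/eqP->|hv]; rewrite ?lexx ?orbT //.
- by rewrite IH ?mem_head ?orbT.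
- by rewrite IH ?inE ?hv ?orbT.
Qed.

Lemma foldr_max_mem a s : foldr Order.max a s \in a :: s.
Proof.
elim: s => [|b s IH] /=; first exact: mem_head.
move: IH; rewrite !inE maxElt; case: ifP => _; last by rewrite eqxx orbT.
by case/orP=> ->; rewrite ?orbT.
Qed.

Lemma foldr_max_ge a s v : v \in a :: s -> v <= foldr Order.max a s.
Proof.
elim: s v => [|b s IH] v /=; first by rewrite inE => /eqP->.
rewrite le_max !inE => /or3P[/eqP->|/eqP->|hv]; rewrite ?lexx ?orbT //.
- by rewrite IH ?mem_head ?orbT.
- by rewrite IH ?inE ?hv ?orbT.
Qed.

End FoldrExtrema.

Lemma mem_head_cons (T : eqType) (x0 : T) s v : s != [::] -> (v \in head x0 s :: s) = (v \in s).
Proof. by case: s => // a s _; rewrite /= inE; case: eqP => // ->; rewrite mem_head. Qed.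

Lemma mindom_le g c : c \in dom g -> mindom g <= c.
Proof. by move=> hc; apply: foldr_min_le; rewrite mem_head_cons //; case: (dom g) hc. Qed.

Lemma le_maxdom g c : c \in dom g -> c <= maxdom g.
Proof. by move=> hc; apply: foldr_max_ge; rewrite mem_head_cons //; case: (dom g) hc. Qed.

Lemma mindom_mem g : dom g != [::] -> mindom g \in dom g.
Proof. by move=> ne; rewrite -(mem_head_cons 0) //; exact: foldr_min_mem. Qed.

Lemma maxdom_mem g : dom g != [::] -> maxdom g \in dom g.
Proof. by move=> ne; rewrite -(mem_head_cons 0) //; exact: foldr_max_mem. Qed.

Lemma mindom_eq g m : m \in dom g -> {in dom g, forall c, m <= c} -> mindom g = m.
Proof.
move=> hm hall; apply: le_anti; rewrite mindom_le // hall // mindom_mem //.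
by case: (dom g) hm.
Qed.

Lemma maxdom_eq g m : m \in dom g -> {in dom g, forall c, c <= m} -> maxdom g = m.
Proof.
move=> hm hall; apply: le_anti; rewrite le_maxdom // hall // maxdom_mem //.
by case: (dom g) hm.
Qed.

Lemma mem_dom g u : u \in graph g -> u.1 \in dom g.
Proof. exact: map_f. Qed.

Lemma mem_ran g u : u \in graph g -> u.2 \in ran g.
Proof. exact: map_f. Qed.

Lemma isfix_dom g c : isfix g c -> c \in dom g.
Proof. by move/isfix_graph/mem_dom. Qed.

Section SortedRat.
Variable fs : seq rat.
Hypothesis fs_sorted : sorted <%R fs.

Lemma sorted_nth_le i j : (i <= j)%N -> (j < size fs)%N -> nth 0 fs i <= nth 0 fs j.
Proof.
move=> hij hj; rewrite (lt_sorted_leq_nth 0 fs_sorted) //.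
by rewrite inE (leq_ltn_trans hij hj).
Qed.

Lemma head_le_nth i : (i < size fs)%N -> head 0 fs <= nth 0 fs i.
Proof. by rewrite -nth0; exact: sorted_nth_le. Qed.

Lemma nth_le_last i : (i < size fs)%N -> nth 0 fs i <= last 0 fs.
Proof.
move=> hi; have hs : (0 < size fs)%N by case: (size fs) hi.
by rewrite -nth_last; apply: sorted_nth_le; rewrite ?prednK // -ltnS prednK.
Qed.

Lemma mem_le_last f : f \in fs -> f <= last 0 fs.
Proof. by move=> hf; rewrite -(nth_index 0 hf) nth_le_last ?index_mem. Qed.

Lemma sorted_gap j f : (j.+1 < size fs)%N -> f \in fs ->
  f <= nth 0 fs j \/ nth 0 fs j.+1 <= f.
Proof.
move=> hj hf; rewrite -(nth_index 0 hf); have hk : (index f fs < size fs)%N by rewrite index_mem.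
by case: (leqP (index f fs) j) => hkj; [left|right]; apply: sorted_nth_le => //; exact: ltnW.
Qed.

Lemma sorted_interval_uniq i j x : (i.+1 < size fs)%N -> (j.+1 < size fs)%N ->
  nth 0 fs i < x < nth 0 fs i.+1 -> nth 0 fs j < x < nth 0 fs j.+1 -> i = j.
Proof.
move=> hi hj /andP[a1 a2] /andP[b1 b2].
case: (ltngtP i j) => // hij.
- by have := lt_trans b1 a2; rewrite ltNge sorted_nth_le // ltnW.
- by have := lt_trans a1 b2; rewrite ltNge sorted_nth_le // ltnW.
Qed.

End SortedRat.

Lemma sorted_interval (fs : seq rat) x : sorted <%R fs ->
  head 0 fs <= x -> x < last 0 fs ->
  exists2 j, (j.+1 < size fs)%N & nth 0 fs j <= x < nth 0 fs j.+1.
Proof.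
elim: fs => [|a s IH] /=; first by move=> _ h1 h2; have := le_lt_trans h1 h2; rewrite ltxx.
case: s IH => [|b s] IH /=; first by move=> _ h1 h2; have := le_lt_trans h1 h2; rewrite ltxx.
case/andP=> hab hs hax hxl.
case: (ltP x b) => hxb; first by exists 0%N; rewrite ?hax.
by have [j hj hx] := IH hs hxb hxl; exists j.+1.
Qed.

Definition fix_chain (g : pisom) (fs : seq rat) :=
  [/\ sorted <%R fs, fs != [::], {in fs, forall c, isfix g c},
      (forall u, u \in graph g -> head 0 fs <= u.1 <= last 0 fs) &
      (forall i, (i.+1 < size fs)%N -> p_monotone g (nth 0 fs i) (nth 0 fs i.+1))].

Section FixChain.
Variables (g : pisom) (fs : seq rat).
Hypothesis gfs : fix_chain g fs.

Lemma fix_chain_sorted : sorted <%R fs.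
Proof. by case: gfs. Qed.

Lemma fix_chain_isfix c : c \in fs -> isfix g c.
Proof. by case: gfs => _ _ hf _ _; exact: hf. Qed.

Lemma fix_chain_monotone i : (i.+1 < size fs)%N -> p_monotone g (nth 0 fs i) (nth 0 fs i.+1).
Proof. by case: gfs => _ _ _ _; exact. Qed.

Lemma fix_chain_head : isfix g (head 0 fs).
Proof. by apply: fix_chain_isfix; case: gfs; case: fs => // a s _ _; rewrite mem_head. Qed.

Lemma fix_chain_last : isfix g (last 0 fs).
Proof. by apply: fix_chain_isfix; case: gfs; case: fs => // a s _ _ /=; rewrite mem_last. Qed.

Lemma fix_chain_bounds u : u \in graph g ->
  [/\ head 0 fs <= u.1, u.1 <= last 0 fs, head 0 fs <= u.2 & u.2 <= last 0 fs].
Proof.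
move=> hu; have [_ _ _ hb _] := gfs; have /andP[h1 h2] := hb _ hu.
have [e1 _] := isfix_le fix_chain_head hu; have [_ e2] := isfix_le fix_chain_last hu.
by rewrite -e1 -e2.
Qed.

Lemma fix_chain_dom : mindom g = head 0 fs /\ maxdom g = last 0 fs.
Proof.
split; [apply: mindom_eq | apply: maxdom_eq].
- exact: isfix_dom fix_chain_head.
- by move=> _ /mapP[u /fix_chain_bounds[] ? ? _ _ ->].
- exact: isfix_dom fix_chain_last.
- by move=> _ /mapP[u /fix_chain_bounds[] ? ? _ _ ->].
Qed.

Lemma fix_chain_informative : informative g.
Proof.
have [e1 e2] := fix_chain_dom; have [s ne hf _ hm] := gfs.
split; rewrite ?e1 ?e2; last by exists fs.
- by apply/eqP=> e; have := isfix_dom fix_chain_head; rewrite e.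
- exact: fix_chain_head.
- exact: fix_chain_last.
Qed.

Lemma fix_chain_pinv : fix_chain (pinv g) fs.
Proof.
have [s ne hf _ hm] := gfs; split => //.
- by move=> c /hf /isfix_pinv.
- by move=> [a b]; rewrite mem_pinv => /fix_chain_bounds[] /= _ _ -> ->.
by move=> i /hm[/p_increasing_pinv|/p_decreasing_pinv] h; [right|left].
Qed.

Lemma fix_chain_interval x : head 0 fs < x < last 0 fs -> x \notin fs ->
  exists2 j, (j.+1 < size fs)%N & nth 0 fs j < x < nth 0 fs j.+1.
Proof.
case/andP=> h1 h2 hx; have [j hj /andP[a b]] := sorted_interval fix_chain_sorted (ltW h1) h2.
exists j => //; rewrite b andbT lt_neqAle a andbT.
by apply: contraNneq hx => <-; rewrite mem_nth // ltnW.
Qed.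

Lemma Ess_fix_chain c : c \in Ess g -> head 0 fs < c < last 0 fs.
Proof.
have [e1 e2] := fix_chain_dom.
rewrite mem_filter e1 e2 mem_cat andbC.
case/and3P=> /orP[] /mapP[u /fix_chain_bounds[a1 a2 a3 a4] ->] n1 n2;
  by rewrite !lt_neqAle ?a1 ?a2 ?a3 ?a4 eq_sym n1 n2.
Qed.

End FixChain.

Lemma informative_fix_chain g : informative g ->
  exists fs, [/\ fix_chain g fs, head 0 fs = mindom g & last 0 fs = maxdom g].
Proof.
case=> ne hm hM [fs [fne s [e1 e2] hf hmono]].
exists fs; split => //; split => // u hu.
by rewrite e1 e2 mindom_le ?le_maxdom ?mem_dom.
Qed.

Definition extendable (g : pisom) (x y : rat) := forall u, u \in graph g ->
  ((u.1 < x) = (u.2 < y)) /\ ((x < u.1) = (y < u.2)).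

Lemma is_pisom_cons g x y : extendable g x y -> is_pisom ((x, y) :: graph g).
Proof.
move=> hxy u v; rewrite !inE => /predU1P[->|hu] /predU1P[->|hv] /=.
- by rewrite !ltxx.
- by have [_ ->] := hxy _ hv.
- by have [-> _] := hxy _ hu.
- exact: graph_lt hu hv.
Qed.

Definition pext (g : pisom) x y (h : extendable g x y) : pisom := PIsom (is_pisom_cons h).

Section OnePointExtension.
Variables (g : pisom) (x y : rat) (h : extendable g x y).

Lemma mem_pext u : (u \in graph (pext h)) = (u == (x, y)) || (u \in graph g).
Proof. by rewrite inE. Qed.

Lemma extends_pext : extends (pext h) g.
Proof. by move=> u hu; rewrite mem_pext hu orbT. Qed.

Lemma app_pext : app (pext h) x = Some y.
Proof. by rewrite /app /= eqxx. Qed.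

Lemma isfix_pext c : c != x -> isfix g c -> isfix (pext h) c.
Proof. by move=> ne; rewrite /isfix /app /= eq_sym (negbTE ne). Qed.

Lemma p_increasing_pext c d : p_increasing g c d -> c != x -> d != x ->
  (c < x < d -> x < y) -> p_increasing (pext h) c d.
Proof.
case=> hc hd hi nc nd hxy; split; try exact: isfix_pext.
by move=> u; rewrite mem_pext => /predU1P[->//|]; exact: hi.
Qed.

Lemma p_decreasing_pext c d : p_decreasing g c d -> c != x -> d != x ->
  (c < x < d -> y < x) -> p_decreasing (pext h) c d.
Proof.
case=> hc hd hi nc nd hxy; split; try exact: isfix_pext.
by move=> u; rewrite mem_pext => /predU1P[->//|]; exact: hi.
Qed.

Lemma fix_chain_pext fs j : fix_chain g fs -> x \notin dom g ->
  (j.+1 < size fs)%N -> nth 0 fs j < x < nth 0 fs j.+1 ->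
  (p_increasing g (nth 0 fs j) (nth 0 fs j.+1) /\ x < y) \/
  (p_decreasing g (nth 0 fs j) (nth 0 fs j.+1) /\ y < x) ->
  fix_chain (pext h) fs.
Proof.
move=> gfs hx hj hxj hdir; have [s ne hf hb hm] := gfs.
have neq c : c \in fs -> c != x.
  by move=> hc; apply: contraNneq hx => <-; exact: isfix_dom (hf _ hc).
split => //.
- by move=> c hc; apply: isfix_pext; [exact: neq | exact: hf].
- move=> u; rewrite mem_pext => /predU1P[->|/hb//] /=.
  case/andP: hxj => h1 h2; apply/andP; split.
  + exact: le_trans (head_le_nth s (ltnW hj)) (ltW h1).
  + exact: le_trans (ltW h2) (nth_le_last s hj).
move=> i hi.
have n1 : nth 0 fs i != x by apply: neq; rewrite mem_nth // ltnW.
have n2 : nth 0 fs i.+1 != x by apply: neq; rewrite mem_nth.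
have [hxi|hxi] := boolP (nth 0 fs i < x < nth 0 fs i.+1).
  have ji := sorted_interval_uniq s hj hi hxj hxi; subst i.
  by case: hdir => -[hmo hxy]; [left; apply: p_increasing_pext | right; apply: p_decreasing_pext].
by case: (hm _ hi) => hmo; [left; apply: p_increasing_pext | right; apply: p_decreasing_pext];
  rewrite // (negbTE hxi).
Qed.

End OnePointExtension.

(* lo is the largest image of a point left of x (or lo0), hi the smallest
   image of a point right of x (or hi0). *)
Lemma image_gap (s : seq (rat * rat)) x lo0 hi0 : lo0 < hi0 ->
  (forall u, u \in s -> u.1 < x -> u.2 < hi0) ->
  (forall u, u \in s -> x < u.1 -> lo0 < u.2) ->
  (forall u v, u \in s -> v \in s -> u.1 < x < v.1 -> u.2 < v.2) ->
  exists lo hi, [/\ lo0 <= lo < hi, hi <= hi0,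
     (forall u, u \in s -> u.1 < x -> u.2 <= lo),
     (forall u, u \in s -> x < u.1 -> hi <= u.2) &
     hi = hi0 \/ exists2 v, v \in s & x < v.1 /\ hi = v.2].
Proof.
move=> lohi H1 H2 H3.
set L := [seq u.2 | u <- s & u.1 < x]; set H := [seq u.2 | u <- s & x < u.1].
set lo := foldr Order.max lo0 L; set hi := foldr Order.min hi0 H.
have lo_cases : lo = lo0 \/ exists2 u, u \in s & u.1 < x /\ lo = u.2.
  rewrite /lo; move: (foldr_max_mem lo0 L); rewrite inE => /predU1P[->|/mapP[u]]; first by left.
  by rewrite mem_filter => /andP[hux hu] ->; right; exists u.
have hi_cases : hi = hi0 \/ exists2 v, v \in s & x < v.1 /\ hi = v.2.
  rewrite /hi; move: (foldr_min_mem hi0 H); rewrite inE => /predU1P[->|/mapP[v]]; first by left.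
  by rewrite mem_filter => /andP[hxv hv] ->; right; exists v.
exists lo, hi; split => //.
- rewrite foldr_max_ge ?mem_head //=.
  case: lo_cases hi_cases => [->|[u hu [hux ->]]] [->|[v hv [hxv ->]]];
    [exact: lohi | exact: H2 | exact: H1 | by apply: H3 => //; rewrite hux hxv].
- by rewrite foldr_min_le ?mem_head.
- by move=> u hu hux; apply: foldr_max_ge; rewrite inE map_f ?orbT // mem_filter hux.
- by move=> u hu hux; apply: foldr_min_le; rewrite inE map_f ?orbT // mem_filter hux.
Qed.

Lemma extendable_gap (g : pisom) x lo0 hi0 : x \notin dom g -> lo0 < hi0 ->
  (forall u, u \in graph g -> u.1 < x -> u.2 < hi0) ->
  (forall u, u \in graph g -> x < u.1 -> lo0 < u.2) ->
  exists lo hi, [/\ lo0 <= lo < hi, hi <= hi0,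
     (forall y, lo < y < hi -> extendable g x y) &
     hi = hi0 \/ exists2 v, v \in graph g & x < v.1 /\ hi = v.2].
Proof.
move=> hx lohi H1 H2.
have [|lo [hi [hlo hhi Hlo Hhi hatt]]] := image_gap lohi H1 H2.
  by move=> u v hu hv /andP[h1 h2]; rewrite -(graph_lt hu hv) (lt_trans h1 h2).
exists lo, hi; split => // y /andP[hly hyh] u hu.
case: (ltgtP u.1 x) => hux.
- by have h := le_lt_trans (Hlo _ hu hux) hly; rewrite h ltNge (ltW h).
- by have h := lt_le_trans hyh (Hhi _ hu hux); rewrite h ltNge (ltW h).
- by move: hx; rewrite -hux mem_dom.
Qed.

Lemma exists_between_above (lo hi B : rat) : lo < hi -> B < hi ->
  exists y, [/\ lo < y, y < hi & B < y].
Proof.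
move=> h1 h2; have hm : Num.max lo B < hi by rewrite gt_max h1 h2.
have [a b] := midf_lt hm; exists ((Num.max lo B + hi) / 2).
by split => //; apply: le_lt_trans a; rewrite le_max lexx ?orbT.
Qed.

(* The image of x can be taken beyond B unless a point of dom g between x
   and B bounds it from above. *)
Lemma choose_image_increasing g c d x B : p_increasing g c d -> c < x < d ->
  x \notin dom g -> B < d ->
  exists y, [/\ x < y < d, extendable g x y &
     B < y \/ exists2 u, u \in graph g & x < u.1 < y].
Proof.
case=> hc hd hinc /andP[hcx hxd] hx hB.
have [||lo [hi [/andP[hxlo hlohi] hid hext hatt]]] := extendable_gap hx hxd.
- move=> u hu hux; have [_ e] := isfix_lt hd hu.
  by rewrite -e (lt_trans hux hxd).
- move=> u hu hxu; case hud: (u.1 < d).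
    by apply: (lt_trans hxu); apply: (hinc _ hu); rewrite hud (lt_trans hcx hxu).
  have [e _] := isfix_le hd hu; move: hud => /negbT; rewrite -leNgt e => hh.
  exact: lt_le_trans hxd hh.
have far : hi = d -> exists y, [/\ x < y < d, extendable g x y &
    B < y \/ exists2 u, u \in graph g & x < u.1 < y].
  move=> ehi; have [|y [y1 y2 y3]] := exists_between_above hlohi (B := B); first by rewrite ehi.
  exists y; split; first by rewrite (le_lt_trans hxlo y1) -ehi y2.
  - by apply: hext; rewrite y1 y2.
  - by left.
case: hatt => [|[v hv [hxv ehi]]]; first exact: far.
have [hvd|hdv] := ltP v.1 d; last first.
  apply: far; apply: le_anti; rewrite hid ehi.
  by have [e _] := isfix_le hd hv; rewrite -e.
have hvv : v.1 < hi by rewrite ehi; apply: hinc hv _; rewrite hvd (lt_trans hcx hxv).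
have [y [y1 y2 y3]] := exists_between_above hlohi hvv.
exists y; split; first by rewrite (le_lt_trans hxlo y1) (lt_le_trans y2 hid).
- by apply: hext; rewrite y1 y2.
- by right; exists v => //; rewrite hxv y3.
Qed.

Lemma choose_image_decreasing g c d x : p_decreasing g c d -> c < x < d ->
  x \notin dom g -> exists y, c < y < x /\ extendable g x y.
Proof.
case=> hc hd hdec /andP[hcx hxd] hx.
have [||lo [hi [/andP[hclo hlohi] hix hext _]]] := extendable_gap hx hcx.
- move=> u hu hux; case hcu: (c < u.1).
    by apply: (lt_trans _ hux); apply: (hdec _ hu); rewrite hcu (lt_trans hux hxd).
  have [_ e] := isfix_le hc hu; move: hcu => /negbT; rewrite -leNgt e => hh.
  exact: le_lt_trans hh hcx.
- move=> u hu hxu; have [e _] := isfix_lt hc hu.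
  by rewrite -e (lt_trans hcx hxu).
have [y [y1 y2 _]] := exists_between_above hlohi hlohi.
exists y; split; first by rewrite (le_lt_trans hclo y1) (lt_le_trans y2 hix).
by apply: hext; rewrite y1 y2.
Qed.

Definition orient (b : bool) (g : pisom) : pisom := if b then g else pinv g.

Lemma fix_chain_orient b g fs : fix_chain g fs -> fix_chain (orient b g) fs.
Proof. by case: b => //; exact: fix_chain_pinv. Qed.

Lemma extends_orient b g g' : extends g' g -> extends (orient b g') (orient b g).
Proof. by case: b => //; exact: extends_pinv. Qed.

Lemma orientK b g : app (orient b (orient b g)) =1 app g.
Proof. by case: b => // c; exact: app_pinvK. Qed.

Lemma extend_fix_chain_at g fs z : fix_chain g fs -> head 0 fs < z < last 0 fs ->
  exists g', [/\ fix_chain g' fs, extends g' g & exists v, app g' z = Some v].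
Proof.
move=> gfs hz; have [_ _ hf _ hm] := gfs.
have [hzg|hz'] := boolP (z \in dom g).
  by exists g; split => //; case/mapP: hzg => -[a b] /graph_app + /= ->; exists b.
have hzfs : z \notin fs by apply: contra hz' => /hf/isfix_dom.
have [j hj hzj] := fix_chain_interval gfs hz hzfs.
case: (hm _ hj) => [hinc|hdec].
- have [y [/andP[zy _] he _]] := choose_image_increasing hinc hzj hz' (andP hzj).2.
  exists (pext he); split; last by exists y; exact: app_pext.
  + by apply: fix_chain_pext gfs hz' hj hzj _; left.
  + exact: extends_pext.
- have [y [/andP[_ yz] he]] := choose_image_decreasing hdec hzj hz'.
  exists (pext he); split; last by exists y; exact: app_pext.
  + by apply: fix_chain_pext gfs hz' hj hzj _; right.
  + exact: extends_pext.
Qed.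

Lemma extend_fix_chain_on g fs (Z : seq rat) b : fix_chain g fs ->
  {in Z, forall z, head 0 fs < z < last 0 fs} ->
  exists g', [/\ fix_chain g' fs, extends g' g &
    {in Z, forall z, exists v, app (orient b g') z = Some v}].
Proof.
move=> gfs HZ.
suff [g' [g'fs hg' hZ]] : exists g', [/\ fix_chain g' fs, extends g' (orient b g) &
    {in Z, forall z, exists v, app g' z = Some v}].
  exists (orient b g'); split.
  - exact: fix_chain_orient.
  - by case: b hg' => //; exact: extends_pinvl.
  - by move=> z /hZ[v hv]; exists v; rewrite orientK.
elim: Z HZ => [|z Z IH] HZ; first by exists (orient b g); split => //; exact: fix_chain_orient.
have [|g1 [g1fs hg1 hZ1]] := IH.
  by move=> z' hz'; apply: HZ; rewrite inE hz' orbT.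
have [g2 [g2fs hg2 [v hv]]] := extend_fix_chain_at g1fs (HZ z (mem_head _ _)).
exists g2; split => //; first by move=> u /hg1 /hg2.
move=> z'; rewrite inE => /predU1P[->|/hZ1[v' hv']]; first by exists v.
by exists v'; exact: app_extends hg2 hv'.
Qed.

Definition letter_pisom (P Q : pisom) (G : gen) : pisom := if G is gs then P else Q.

Lemma actE P Q G b x : act P Q (G, b) x = app (orient b (letter_pisom P Q G)) x.
Proof. by case: G; case: b; rewrite /= ?appinvE. Qed.

Lemma act_extends P Q P' Q' l z v : extends P' P -> extends Q' Q ->
  act P Q l z = Some v -> act P' Q' l z = Some v.
Proof.
case: l => G b; rewrite !actE => hP hQ; apply: app_extends; apply: extends_orient.
by case: G.
Qed.

Lemma eval_extends P Q P' Q' w z v : extends P' P -> extends Q' Q ->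
  eval P Q w z = Some v -> eval P' Q' w z = Some v.
Proof.
move=> hP hQ; elim: w v => [|l w IH] v //=.
case e: (eval P Q w z) => [u|] // h; rewrite (IH _ e).
exact: act_extends hP hQ h.
Qed.

Lemma act_mono P Q l a b a' b' : act P Q l a = Some a' -> act P Q l b = Some b' ->
  (a < b) = (a' < b').
Proof. by case: l => G c; rewrite !actE => /app_graph h1 /app_graph h2; exact: graph_lt h1 h2. Qed.

Lemma eval_mono P Q w a b a' b' : eval P Q w a = Some a' -> eval P Q w b = Some b' ->
  (a < b) = (a' < b').
Proof.
elim: w a' b' => [|l w IH] a' b' /=; first by move=> [->] [->].
case e1: (eval P Q w a) => [u|] //; case e2: (eval P Q w b) => [v|] // h1 h2.
by rewrite (IH _ _ e1 e2); exact: act_mono h1 h2.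
Qed.

Lemma eval_isfix P Q w c : isfix P c -> isfix Q c -> eval P Q w c = Some c.
Proof.
move=> hP hQ; elim: w => [|[G b] w IH] //=; rewrite IH.
by case: G; case: b; rewrite //= appinvE; apply: isfix_pinv.
Qed.

Lemma eval_between P Q w m M z d : isfix P m -> isfix Q m -> isfix P M -> isfix Q M ->
  m < z < M -> eval P Q w z = Some d -> m < d < M.
Proof.
move=> hPm hQm hPM hQM /andP[h1 h2] he.
by rewrite -(eval_mono (eval_isfix w hPm hQm) he) -(eval_mono he (eval_isfix w hPM hQM)) h1 h2.
Qed.

Lemma eval_cat P Q v w c : eval P Q (v ++ w) c = obind (eval P Q v) (eval P Q w c).
Proof. by elim: v => [|l v IH] /=; [case: (eval P Q w c) | rewrite IH; case: (eval P Q w c)]. Qed.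

Lemma act_inverse P Q G b z x : act P Q (G, b) z = Some x -> act P Q (G, ~~ b) x = Some z.
Proof. by rewrite !actE; case: b => /=; [exact: app_pinv | exact: pinv_app]. Qed.

Fixpoint climbs (P Q : pisom) (w : word) (x0 x : rat) : Prop :=
  if w is l :: w' then exists2 z, climbs P Q w' x0 z & act P Q l z = Some x /\ z < x
  else x = x0.

Lemma climbs_eval P Q w x0 x : climbs P Q w x0 x -> eval P Q w x0 = Some x.
Proof. by elim: w x => [|l w IH] x /=; [move-> | case=> z /IH -> []]. Qed.

Lemma climbs_extends P Q P' Q' w x0 x : extends P' P -> extends Q' Q ->
  climbs P Q w x0 x -> climbs P' Q' w x0 x.
Proof.
move=> hP hQ; elim: w x => [|l w IH] x //=.
by case=> z /IH hz [hl hzx]; exists z => //; split => //; exact: act_extends hP hQ hl.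
Qed.

Lemma climbs_cat_le P Q v w x0 x y : climbs P Q w x0 x -> climbs P Q (v ++ w) x0 y -> x <= y.
Proof.
move=> hx; elim: v y => [|l v IH] y /=.
  by move/climbs_eval; rewrite (climbs_eval hx) => -[->].
by case=> z /IH hz [_ /ltW]; exact: le_trans.
Qed.

(* A letter followed by its inverse would move a point back down. *)
Lemma climbs_reduced P Q w x0 x : climbs P Q w x0 x -> reduced w.
Proof.
elim: w x => [|l w IH] x /=; first by move=> _ i.
case=> z hz [hl hzx] [|i] /=; last exact: IH hz i.
case: w {IH} hz => [|l' w'] //= [z' _ [hl' hz'z]] _ [e1 e2].
case: l e1 e2 hl => G b; case: l' hl' => G' b' hl' eG e2 hl; rewrite /= in eG e2; subst G'.
have eb : b = ~~ b' by case: b b' e2 {hl hl'} => [] [].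
subst b; move/act_inverse: hl'; rewrite hl => -[ex].
by move: (lt_trans hz'z hzx); rewrite ex ltxx.
Qed.

(* Invariant of the climbs: the pairs added to h0 lie below the current
   point, so a pair of h above it is one of the finitely many pairs of h0. *)
Definition fresh_below (h0 h : pisom) (x : rat) := forall u, u \in graph h ->
  u \in graph h0 \/ u.1 <= x /\ u.2 <= x.

Lemma fresh_below_refl h0 x : fresh_below h0 h0 x.
Proof. by move=> u hu; left. Qed.

Lemma fresh_below_le h0 h x y : x <= y -> fresh_below h0 h x -> fresh_below h0 h y.
Proof.
move=> hxy H u /H[|[h1 h2]]; first by left.
by right; split; apply: le_trans hxy.
Qed.

Lemma fresh_below_pinv h0 h x : fresh_below h0 h x -> fresh_below (pinv h0) (pinv h) x.
Proof.
move=> H u; rewrite mem_pinv => /H[hu|[h1 h2]]; first by left; rewrite mem_pinv.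
by right.
Qed.

Lemma fresh_below_pinvr h0 h x : fresh_below (pinv h0) h x -> fresh_below h0 (pinv h) x.
Proof.
move=> H [a b]; rewrite mem_pinv => /H[|[h1 h2]]; last by right.
by rewrite mem_pinv; left.
Qed.

(* Fresh pairs of h lie below x, so a point blocking the way to B is a point
   of h0. *)
Lemma push_increasing h0 h fs j x B : fix_chain h fs -> fresh_below h0 h x ->
  (j.+1 < size fs)%N -> nth 0 fs j < x < nth 0 fs j.+1 ->
  p_increasing h (nth 0 fs j) (nth 0 fs j.+1) -> B < nth 0 fs j.+1 ->
  exists h' y, [/\ fix_chain h' fs, extends h' h, fresh_below h0 h' y,
     app h' x = Some y & x < y < nth 0 fs j.+1] /\
     (B < y \/ exists2 u, u \in graph h0 & x <= u.1 < y).
Proof.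
move=> hfs H hj hxj hinc hB; have [_ hd hi] := hinc.
have [/mapP[[a b] hab /= exa]|hx] := boolP (x \in dom h).
  subst a; have hxb : x < b by exact: hi hab hxj.
  have hbd : b < nth 0 fs j.+1.
    by have [_ <-] := isfix_lt hd hab; case/andP: hxj.
  exists h, b; split; first split => //.
  - exact: fresh_below_le (ltW hxb) H.
  - exact: graph_app.
  - by rewrite hxb.
  right; exists (x, b); last by rewrite /= lexx hxb.
  by case: (H _ hab) => // -[_ /=]; rewrite leNgt hxb.
have [y [/andP[xy yd] hxy hpast]] := choose_image_increasing hinc hxj hx hB.
exists (pext hxy), y; split; first split.
- by apply: fix_chain_pext hfs hx hj hxj _; left.
- exact: extends_pext.
- move=> u; rewrite mem_pext => /predU1P[->|/H[|[h1 h2]]]; [|by left|].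
    by right; rewrite /= (ltW xy).
  by right; split; apply: le_trans (ltW xy).
- exact: app_pext.
- by rewrite xy yd.
case: hpast => [|[u hu /andP[u1 u2]]]; first by left.
right; exists u; last by rewrite (ltW u1) u2.
by case: (H u hu) => // -[/=]; rewrite leNgt u1.
Qed.

Lemma push_up h0 g fs j x B : fix_chain g fs -> fresh_below h0 g x ->
  (j.+1 < size fs)%N -> nth 0 fs j < x < nth 0 fs j.+1 -> B < nth 0 fs j.+1 ->
  exists g' (b : bool) y, [/\ fix_chain g' fs, extends g' g, fresh_below h0 g' y,
     app (orient b g') x = Some y & x < y < nth 0 fs j.+1] /\
     (B < y \/ exists2 v, v \in dom h0 ++ ran h0 & x <= v < y).
Proof.
move=> gfs H hj hxj hB; have [_ _ _ _ hm] := gfs.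
case: (hm _ hj) => [hinc|/p_decreasing_pinv hinc].
- have [h' [y [[h'fs hh' H' hxy xy] past]]] := push_increasing gfs H hj hxj hinc hB.
  exists h', true, y; split; first by split.
  case: past => [|[u hu hh]]; [by left | right].
  by exists u.1; rewrite // mem_cat mem_dom.
- have [h' [y [[h'fs hh' H' hxy xy] past]]] :=
    push_increasing (fix_chain_pinv gfs) (fresh_below_pinv H) hj hxj hinc hB.
  exists (pinv h'), false, y; split; first split => //.
  + exact: fix_chain_pinv.
  + exact: extends_pinvl.
  + exact: fresh_below_pinvr.
  + by rewrite /= app_pinvK.
  case: past => [|[[a b] hu hh]]; [by left | right].
  by exists a; rewrite // mem_cat orbC; move: hu; rewrite mem_pinv => /mem_ran ->.
Qed.

Definition nb_above (L : seq rat) (x : rat) := count (fun v => x <= v) L.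

Lemma nb_above_le L x y : x <= y -> (nb_above L y <= nb_above L x)%N.
Proof. by move=> hxy; apply: sub_count => v /=; exact: le_trans. Qed.

Lemma nb_above_lt L x y v : v \in L -> x <= v < y -> (nb_above L y < nb_above L x)%N.
Proof.
move=> + /andP[h1 h2]; have hxy := le_trans h1 (ltW h2).
elim: L => [|a L IH] //=; rewrite inE => /predU1P[<-|/IH hL].
  by rewrite h1 leNgt h2 add0n ltnS nb_above_le.
case hya: (y <= a); first by rewrite (le_trans hxy hya) ltn_add2l.
by rewrite add0n (leq_trans hL) ?leq_addl.
Qed.

Lemma lex_ltn_fst a a' b b' K : (a' < a)%N -> (b' <= K)%N -> (a' * K.+1 + b' < a * K.+1 + b)%N.
Proof.
move=> ha hb; apply: leq_trans (leq_addr b _).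
by apply: leq_trans (leq_mul ha (leqnn K.+1)); rewrite mulSn addnC ltn_add2r ltnS.
Qed.

Lemma lex_ltn_snd a a' b b' K : (a' <= a)%N -> (b' < b)%N -> (a' * K.+1 + b' < a * K.+1 + b)%N.
Proof. by move=> ha hb; rewrite -addnS leq_add // leq_mul2r ha orbT. Qed.

Section Climbing.
Variables (p q : pisom) (fsp fsq : seq rat) (x0 : rat).
Hypotheses (head_eq : head 0 fsp = head 0 fsq) (last_eq : last 0 fsp = last 0 fsq).
Hypothesis common_fix : forall c, c \in fsp -> c \in fsq -> c = head 0 fsq \/ c = last 0 fsq.

Local Notation m := (head 0 fsq).
Local Notation M := (last 0 fsq).

Definition pq_points := dom p ++ ran p ++ dom q ++ ran q.

(* Lexicographic: first the fixed points of the chains above x, then the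
   points of p and q above x. *)
Definition climb_measure x :=
  (nb_above (fsp ++ fsq) x * (size pq_points).+1 + nb_above pq_points x)%N.

Lemma climb_measure_lt_fix f x y : f \in fsp ++ fsq -> x <= f < y ->
  (climb_measure y < climb_measure x)%N.
Proof. by move=> hf hxfy; apply: lex_ltn_fst; [exact: nb_above_lt hxfy | exact: count_size]. Qed.

Lemma climb_measure_lt_pq v x y : v \in pq_points -> x <= v < y ->
  (climb_measure y < climb_measure x)%N.
Proof.
move=> hv /[dup] /andP[h1 h2] hxvy; apply: lex_ltn_snd; last exact: nb_above_lt hxvy.
exact/nb_above_le/ltW/(le_lt_trans h1 h2).
Qed.

Record climb_state (P Q : pisom) (w : word) (x : rat) : Prop := ClimbState {
  state_chainP : fix_chain P fsp;
  state_chainQ : fix_chain Q fsq;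
  state_freshP : fresh_below p P x;
  state_freshQ : fresh_below q Q x;
  state_extP : extends P p;
  state_extQ : extends Q q;
  state_range : m < x < M;
  state_climbs : climbs P Q w x0 x }.

Lemma climb_step_s P Q w x j B : climb_state P Q w x ->
  (j.+1 < size fsp)%N -> nth 0 fsp j < x < nth 0 fsp j.+1 -> B < nth 0 fsp j.+1 ->
  (forall y, x < y -> B < y -> (climb_measure y < climb_measure x)%N) ->
  exists P' Q' w' y, climb_state P' Q' w' y /\ (climb_measure y < climb_measure x)%N.
Proof.
case=> hP hQ fP fQ eP eQ hx hw hj hxj hB hpast.
have [P' [b [y [[hP' hPP' fP' hxy /andP[xy yd]] past]]]] := push_up hP fP hj hxj hB.
exists P', Q, ((gs, b) :: w), y; split.
  split => //.
  - exact: fresh_below_le (ltW xy) fQ.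
  - by move=> u /eP /hPP'.
  - rewrite (lt_trans (andP hx).1 xy) (lt_le_trans yd) // -last_eq.
    exact: (nth_le_last (fix_chain_sorted hP) hj).
  - by exists x; [exact: (climbs_extends hPP' (@extends_refl Q) hw) | rewrite actE].
case: past => [|[v hv hxvy]]; first exact: hpast.
by apply: climb_measure_lt_pq hxvy; rewrite /pq_points catA mem_cat hv.
Qed.

Lemma climb_step_t P Q w x j B : climb_state P Q w x ->
  (j.+1 < size fsq)%N -> nth 0 fsq j < x < nth 0 fsq j.+1 -> B < nth 0 fsq j.+1 ->
  (forall y, x < y -> B < y -> (climb_measure y < climb_measure x)%N) ->
  exists P' Q' w' y, climb_state P' Q' w' y /\ (climb_measure y < climb_measure x)%N.
Proof.
case=> hP hQ fP fQ eP eQ hx hw hj hxj hB hpast.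
have [Q' [b [y [[hQ' hQQ' fQ' hxy /andP[xy yd]] past]]]] := push_up hQ fQ hj hxj hB.
exists P, Q', ((gt, b) :: w), y; split.
  split => //.
  - exact: fresh_below_le (ltW xy) fP.
  - by move=> u /eQ /hQQ'.
  - rewrite (lt_trans (andP hx).1 xy) (lt_le_trans yd) //.
    exact: (nth_le_last (fix_chain_sorted hQ) hj).
  - by exists x; [exact: (climbs_extends (@extends_refl P) hQQ' hw) | rewrite actE].
case: past => [|[v hv hxvy]]; first exact: hpast.
by apply: climb_measure_lt_pq hxvy; rewrite /pq_points catA mem_cat hv orbT.
Qed.

Lemma climb_step P Q w x : climb_state P Q w x ->
  ~~ all (fun f => (f < x) || (f == M)) fsq ->
  exists P' Q' w' y, climb_state P' Q' w' y /\ (climb_measure y < climb_measure x)%N.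
Proof.
move=> st hnot; have [hP hQ _ _ _ _ hxq _] := st.
have hxp : head 0 fsp < x < last 0 fsp by rewrite head_eq last_eq.
have past_fix f : f \in fsp ++ fsq -> x <= f ->
    forall y, x < y -> f < y -> (climb_measure y < climb_measure x)%N.
  by move=> hf hxf y _ hfy; apply: climb_measure_lt_fix hf _; rewrite hxf hfy.
have not_end : x != m /\ x != M.
  by case/andP: hxq => h1 h2; rewrite !neq_lt h1 h2 orbT.
have [xq|xq] := boolP (x \in fsq).
  have xp : x \notin fsp.
    by apply/negP=> xp; case: not_end; case: (common_fix xp xq) => ->; rewrite eqxx.
  have [j hj hxj] := fix_chain_interval hP hxp xp.
  apply: climb_step_s st hj hxj (andP hxj).2 _ => y xy _.
  by apply: (past_fix x _ (lexx x) y xy xy); rewrite mem_cat xq orbT.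
have [xp|xp] := boolP (x \in fsp).
  have [j hj hxj] := fix_chain_interval hQ hxq xq.
  apply: climb_step_t st hj hxj (andP hxj).2 _ => y xy _.
  by apply: (past_fix x _ (lexx x) y xy xy); rewrite mem_cat xp.
have [jp hjp hxjp] := fix_chain_interval hP hxp xp.
have [jq hjq hxjq] := fix_chain_interval hQ hxq xq.
have dp := mem_nth 0 hjp; have dq := mem_nth 0 hjq.
case: (ltgtP (nth 0 fsp jp.+1) (nth 0 fsq jq.+1)) => hd.
- apply: climb_step_t st hjq hxjq hd _ => y xy hy.
  by apply: (past_fix _ _ _ y xy hy); rewrite ?mem_cat ?dp // ltW // (andP hxjp).2.
- apply: climb_step_s st hjp hxjp hd _ => y xy hy.
  by apply: (past_fix _ _ _ y xy hy); rewrite ?mem_cat ?dq ?orbT // ltW // (andP hxjq).2.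
(* The two intervals end at a common fixed point, necessarily M: then x is
   already in the last interval of fsq. *)
exfalso; move: dp; rewrite hd => dp.
have [emin|eM] := common_fix dp dq.
  by case/andP: hxjq => _; rewrite emin => /(lt_trans (andP hxq).1); rewrite ltxx.
move/negP: hnot; apply; apply/allP => f hf.
case: (sorted_gap (fix_chain_sorted hQ) hjq hf) => hfj.
  by rewrite (le_lt_trans hfj (andP hxjq).1).
by rewrite eM in hfj; rewrite eq_le mem_le_last ?(fix_chain_sorted hQ) // hfj orbT.
Qed.

Lemma climb_to_last_interval P Q w x : climb_state P Q w x ->
  exists P' Q' w' x', climb_state P' Q' w' x' /\ {in fsq, forall f, f < x' \/ f = M}.
Proof.
have [n] : exists n, (climb_measure x < n)%N by exists (climb_measure x).+1.
elim: n P Q w x => [|n IH] P Q w x; first by rewrite ltn0.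
move=> hn st.
have [hall|hnot] := boolP (all (fun f => (f < x) || (f == M)) fsq).
  by exists P, Q, w, x; split => // f /(allP hall)/orP[|/eqP]; [left|right].
have [P' [Q' [w' [y [st' hy]]]]] := climb_step st hnot.
exact: IH _ _ _ y (leq_trans hy hn) st'.
Qed.

Lemma eval_in_range P Q w z d : fix_chain P fsp -> fix_chain Q fsq ->
  m < z < M -> eval P Q w z = Some d -> m < d < M.
Proof.
move=> hP hQ; apply: eval_between.
- by rewrite -head_eq; exact: fix_chain_head hP.
- exact: fix_chain_head hQ.
- by rewrite -last_eq; exact: fix_chain_last hP.
- exact: fix_chain_last hQ.
Qed.

Definition t_word (w : word) := all (fun l : letter => if l.1 is gt then true else false) w.

Lemma extend_word_defined w (Z : seq rat) P Q : fix_chain P fsp -> fix_chain Q fsq ->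
  {in Z, forall z, m < z < M} ->
  exists P' Q', [/\ fix_chain P' fsp, fix_chain Q' fsq, extends P' P & extends Q' Q] /\
    (t_word w -> P' = P) /\ {in Z, forall z, exists d, eval P' Q' w z = Some d}.
Proof.
elim: w P Q => [|[G b] w IH] P Q hP hQ HZ.
  by exists P, Q; do 2!split => //; move=> z _; exists z.
have [P1 [Q1 [[hP1 hQ1 hPP1 hQQ1] [tP1 hZ1]]]] := IH P Q hP hQ HZ.
pose Z1 := pmap (eval P1 Q1 w) Z.
have HZ1 : {in Z1, forall u, m < u < M}.
  by move=> u; rewrite mem_pmap => /mapP[z hz /esym]; apply: eval_in_range hP1 hQ1 (HZ z hz).
have defined P' Q' : extends P' P1 -> extends Q' Q1 ->
    {in Z1, forall u, exists d, act P' Q' (G, b) u = Some d} ->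
    {in Z, forall z, exists d, eval P' Q' ((G, b) :: w) z = Some d}.
  move=> hP' hQ' hact z hz; have [u hu] := hZ1 z hz.
  have [|d hd] := hact u; first by rewrite mem_pmap -hu map_f.
  by exists d; rewrite /= (eval_extends hP' hQ' hu).
case: G defined => defined.
- have HZ1' : {in Z1, forall u, head 0 fsp < u < last 0 fsp} by rewrite head_eq last_eq.
  have [P2 [hP2 hP12 hZ2]] := extend_fix_chain_on b hP1 HZ1'.
  exists P2, Q1; split; first by split => // u /hPP1 /hP12.
  by split => //; apply: defined => // u /hZ2; rewrite actE.
- have [Q2 [hQ2 hQ12 hZ2]] := extend_fix_chain_on b hQ1 HZ1.
  exists P1, Q2; split; first by split => // u /hQQ1 /hQ12.
  by split => //; apply: defined => // u /hZ2; rewrite actE.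
Qed.

Lemma reach_last_interval (Z : seq rat) : fix_chain p fsp -> fix_chain q fsq ->
  m < x0 < M -> {in Z, forall z, m < z < M} ->
  exists P Q w x j, [/\ fix_chain P fsp, fix_chain Q fsq, extends P p & extends Q q] /\
    [/\ climbs P Q w x0 x, {in Z, forall z, exists d, eval P Q w z = Some d},
        (j.+1 < size fsq)%N, nth 0 fsq j.+1 = M & nth 0 fsq j < x < M].
Proof.
move=> hp hq hx0 HZ.
have [P1 [Q1 [w1 [x1 [[hP1 hQ1 _ _ hP1p hQ1q hx1 hw1] x1_last]]]]] :=
  climb_to_last_interval (ClimbState hp hq (@fresh_below_refl p x0) (@fresh_below_refl q x0)
    (@extends_refl p) (@extends_refl q) hx0 (erefl x0 : climbs p q [::] x0 x0)).
have [P2 [Q2 [[hP2 hQ2 hP12 hQ12] [_ w1_def]]]] := extend_word_defined w1 hP1 hQ1 HZ.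
have x1q : x1 \notin fsq.
  apply/negP=> /x1_last[|ex]; first by rewrite ltxx.
  by move: hx1; rewrite ex ltxx andbF.
have [j hj hx1j] := fix_chain_interval hQ2 hx1 x1q.
have hjM : nth 0 fsq j.+1 = M.
  have [hlt|//] := x1_last _ (mem_nth 0 hj).
  by have := lt_trans (andP hx1j).2 hlt; rewrite ltxx.
exists P2, Q2, w1, x1, j; split; first by split => // u; [move/hP1p/hP12 | move/hQ1q/hQ12].
split => //; first exact: climbs_extends hP12 hQ12 hw1.
by rewrite (andP hx1j).1 (andP hx1).2.
Qed.

End Climbing.

(* Each step either passes B or one of the finitely many points of h0. *)
Lemma climb_last_interval h0 P fsq x0 j B : (j.+1 < size fsq)%N ->
  nth 0 fsq j.+1 = last 0 fsq -> B < last 0 fsq ->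
  forall Q w x, fix_chain Q fsq -> fresh_below h0 Q x ->
  nth 0 fsq j < x < last 0 fsq -> climbs P Q w x0 x ->
  exists Q' (b : bool) v y, [/\ fix_chain Q' fsq, extends Q' Q, t_word v,
    climbs P Q' ((gt, b) :: v ++ w) x0 y & B < y < last 0 fsq].
Proof.
move=> hj hjM hB Q w x.
have [n] : exists n, (nb_above (dom h0 ++ ran h0) x < n)%N.
  by exists (nb_above (dom h0 ++ ran h0) x).+1.
elim: n Q w x => [|n IH] Q w x; first by rewrite ltn0.
move=> hn hQ fQ hx hw.
have hxj : nth 0 fsq j < x < nth 0 fsq j.+1 by rewrite hjM.
have hBj : B < nth 0 fsq j.+1 by rewrite hjM.
have [Q' [b [y [[hQ' hQQ' fQ' hxy /andP[xy yM]] past]]]] := push_up hQ fQ hj hxj hBj.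
have hw' : climbs P Q' ((gt, b) :: w) x0 y.
  by exists x; [exact: (climbs_extends (@extends_refl P) hQQ' hw) | rewrite actE].
case: past => [hBy|[v hv hxvy]]; first by exists Q', b, [::], y; split => //; rewrite hBy -hjM.
have hy : nth 0 fsq j < y < last 0 fsq by rewrite -hjM (lt_trans (andP hxj).1 xy).
have [Q'' [b' [v' [y' [hQ'' hQ'Q'' tv' hw'' hy']]]]] :=
  IH Q' _ y (leq_trans (nb_above_lt hv hxvy) hn) hQ' fQ' hy hw'.
exists Q'', b', (rcons v' (gt, b)), y'; split => //.
- by move=> u /hQQ' /hQ'Q''.
- by rewrite /t_word all_rcons.
- by rewrite cat_rcons.
Qed.

Lemma Ess_range p q fsp fsq : fix_chain p fsp -> fix_chain q fsq ->
  head 0 fsp = head 0 fsq -> last 0 fsp = last 0 fsq ->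
  {in Ess p ++ Ess q, forall c, head 0 fsq < c < last 0 fsq}.
Proof.
move=> hp hq em eM c; rewrite mem_cat => /orP[/(Ess_fix_chain hp)|/(Ess_fix_chain hq)] //.
by rewrite em eM.
Qed.

Lemma p_monotone_orient g c d b z y : p_monotone g c d -> c < z < d -> c < y < d -> z < y ->
  app (orient b g) z = Some y -> if b then p_increasing g c d else p_decreasing g c d.
Proof.
move=> hmono hz hy zy; case: b hmono => [[//|[_ _ hi]]|[[_ _ hi]|//]] /=.
- by move/app_graph/hi/(_ hz); rewrite /= ltNge (ltW zy).
- by move/pinv_app/app_graph/hi/(_ hy); rewrite /= ltNge (ltW zy).
Qed.

(* The leftmost letter t^{+-1} moves z up to y inside the last interval of
   fsq, which is therefore J of clause (v), with the matching orientation. *)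
Lemma liberates_p_of_climb p q P Q fsp fsq j (b : bool) v x0 z y :
  fix_chain p fsp -> fix_chain q fsq -> fix_chain P fsp -> fix_chain Q fsq ->
  head 0 fsp = head 0 fsq -> last 0 fsp = last 0 fsq ->
  extends P p -> extends Q q ->
  x0 \in Ess p ++ Ess q -> {in Ess p ++ Ess q, forall c, x0 <= c} ->
  {in Ess p ++ Ess q, forall c, exists d, eval P Q ((gt, b) :: v) c = Some d} ->
  climbs P Q v x0 z -> act P Q (gt, b) z = Some y ->
  (j.+1 < size fsq)%N -> nth 0 fsq j.+1 = last 0 fsq -> nth 0 fsq j < z < y ->
  {in Ess P, forall e, e < y} ->
  liberates_p p q P Q ((gt, b) :: v).
Proof.
move=> hp hq hP hQ em eM hPp hQq hx0 x0_min hdef hv hzy hj hjM /andP[jz zy] hEss.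
have hw : climbs P Q ((gt, b) :: v) x0 y by exists z.
have HE := Ess_range hp hq em eM.
have range c d : c \in Ess p ++ Ess q -> eval P Q ((gt, b) :: v) c = Some d ->
    head 0 fsq < d < last 0 fsq.
  by move=> /HE; apply: eval_in_range em eM _ _ _ _ _ hP hQ.
have [mp Mp] := fix_chain_dom hp; have [mq Mq] := fix_chain_dom hq.
have [mP MP] := fix_chain_dom hP; have [mQ MQ] := fix_chain_dom hQ.
split.
- by split.
- exact: climbs_reduced hw.
- by split; [exact: fix_chain_informative hP | exact: fix_chain_informative hQ].
- by split; rewrite ?mp ?mq ?mP ?mQ ?Mp ?Mq ?MP ?MQ.
exists b, v; split => //; split => //.
  move=> c hc c_min d; have -> : c = x0 by apply: le_anti; rewrite c_min ?x0_min.
  by rewrite (climbs_eval hw) => -[<-] e /hEss.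
have yM : y < last 0 fsq by case/andP: (range _ _ hx0 (climbs_eval hw)).
exists (nth 0 fsq j); split.
  move=> c d hc hd; rewrite Mq (lt_le_trans (lt_trans jz zy)) ?(andP (range _ _ hc hd)).2 //.
  by rewrite leNgt -(eval_mono hd (climbs_eval hw)) -leNgt x0_min.
rewrite Mq -hjM; move: hzy; rewrite actE /=; apply: p_monotone_orient.
- exact: (fix_chain_monotone hQ hj).
- by rewrite jz hjM (lt_trans zy yM).
- by rewrite (lt_trans jz zy) hjM yM.
- exact: zy.
Qed.

Lemma liberates_p_Ess_nil p q : informative p -> informative q ->
  Ess p ++ Ess q = [::] -> liberates_p p q p q [:: (gt, true)].
Proof.
move=> ip iq E0; split.
- by split; exact: extends_refl.
- by move=> [|i].
- by split.
- by split.
exists true, [::]; split => //; split; rewrite ?E0 //.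
exists (maxdom q); split; rewrite ?E0 //.
have [_ _ hM _] := iq; split => // u _ /andP[h1 h2].
by have := lt_trans h1 h2; rewrite ltxx.
Qed.

Lemma liberates_p_of_fix_chains p q fsp fsq :
  fix_chain p fsp -> fix_chain q fsq ->
  head 0 fsp = head 0 fsq -> last 0 fsp = last 0 fsq ->
  (forall c, c \in fsp -> c \in fsq -> c = head 0 fsq \/ c = last 0 fsq) ->
  Ess p ++ Ess q != [::] -> exists p' q' w, liberates_p p q p' q' w.
Proof.
move=> hp hq em eM hcom; set E := Ess p ++ Ess q => neE.
have HE := Ess_range hp hq em eM.
pose x0 := foldr Order.min (head 0 E) E.
have hx0 : x0 \in E by rewrite -(mem_head_cons 0) // foldr_min_mem.
have x0_min : {in E, forall c, x0 <= c} by move=> c hc; rewrite foldr_min_le ?mem_head_cons.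
have [P2 [Q2 [w1 [x1 [j [[hP2 hQ2 hP2p hQ2q] [hw1 w1_def hj hjM hx1j]]]]]]] :=
  reach_last_interval em eM hcom hp hq (HE _ hx0) HE.
pose B := foldr Order.max x1 (Ess P2).
have hBM : B < last 0 fsq.
  rewrite /B; have := foldr_max_mem x1 (Ess P2); rewrite inE => /predU1P[->|/(Ess_fix_chain hP2)].
    by case/andP: hx1j.
  by rewrite eM => /andP[].
have [Q3 [b [v [y [hQ3 hQ23 tv [z hw3 [hzy zy]] /andP[By _]]]]]] :=
  climb_last_interval hj hjM hBM hQ2 (@fresh_below_refl Q2 x1) hx1j hw1.
pose Z1 := pmap (eval P2 Q2 w1) E.
have HZ1 : {in Z1, forall u, head 0 fsq < u < last 0 fsq}.
  move=> u; rewrite mem_pmap => /mapP[c hc /esym].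
  exact: eval_in_range em eM _ _ _ _ _ hP2 hQ2 (HE c hc).
have [P4 [Q4 [[_ hQ4 _ hQ34] [/(_ tv) eP4 v_def]]]] :=
  extend_word_defined em eM ((gt, b) :: v) hP2 hQ3 HZ1.
subst P4; exists P2, Q4, ((gt, b) :: v ++ w1).
apply: (liberates_p_of_climb hp hq hP2 hQ4 em eM hP2p _ hx0 x0_min _
  (climbs_extends (@extends_refl P2) hQ34 hw3) (act_extends (@extends_refl P2) hQ34 hzy) hj hjM).
- by move=> u /hQ2q /hQ23 /hQ34.
- move=> c hc; have [u hu] := w1_def c hc.
  have [|d hd] := v_def u; first by rewrite mem_pmap -hu map_f.
  have hu4 : eval P2 Q4 w1 c = Some u.
    by apply: (eval_extends (@extends_refl P2) _ hu) => a /hQ23 /hQ34.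
  by exists d; rewrite -cat_cons eval_cat hu4.
- have hw1' : climbs P2 Q3 w1 x0 x1 by apply: (climbs_extends (@extends_refl P2) hQ23 hw1).
  by rewrite zy (lt_le_trans (andP hx1j).1 (climbs_cat_le hw1' hw3)).
- by move=> e he; apply: le_lt_trans By; apply: foldr_max_ge; rewrite inE he orbT.
Qed.

Lemma liberates_p_exists p q : elementary p q -> exists p' q' w, liberates_p p q p' q' w.
Proof.
case=> ip iq emin emax hcom.
have [E0|neE] := eqVneq (Ess p ++ Ess q) [::].
  by exists p, q, [:: (gt, true)]; exact: liberates_p_Ess_nil.
have [fsp [hp hp1 hp2]] := informative_fix_chain ip.
have [fsq [hq hq1 hq2]] := informative_fix_chain iq.
apply: (liberates_p_of_fix_chains hp hq) neE; rewrite ?hp1 ?hp2 ?hq1 ?hq2 //.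
move=> c /(fix_chain_isfix hp) hcp /(fix_chain_isfix hq) hcq.
by rewrite -emin -emax; exact: hcom.
Qed.

Definition swap_letter (l : letter) : letter := (if l.1 is gs then gt else gs, l.2).

Lemma eval_swap_letter P Q w c : eval P Q (map swap_letter w) c = eval Q P w c.
Proof.
elim: w => [|[G b] w IH] //=; rewrite IH.
by case: (eval Q P w c) => // u; case: G; case: b.
Qed.

Lemma reduced_swap_letter w : reduced w -> reduced (map swap_letter w).
Proof.
move=> hr i; rewrite size_map => hi [e1 e2]; apply: (hr i hi).
have hi' : (i < size w)%N by exact: ltnW.
rewrite !(set_nth_default (swap_letter (gs, true)) (gs, true)) ?size_map // in e1 e2.
rewrite !(nth_map (gs, true)) // in e1 e2; move: e1 e2.
by case: (nth (gs, true) w i) => [[] b1]; case: (nth (gs, true) w i.+1) => [[] b2].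
Qed.

Lemma elementary_sym p q : elementary p q -> elementary q p.
Proof.
case=> ip iq emin emax hcom; split => // c hq hp.
by rewrite -emin -emax; case: (hcom c hp hq); [left|right].
Qed.

Lemma liberates_q_exists p q : elementary p q -> exists p' q' w, liberates_q p q p' q' w.
Proof.
move/elementary_sym/liberates_p_exists.
case=> [A [B [w [hext hr hinf hdom [b [v [ew [hdef hmin [a [ha hJ]]]]]]]]]].
have memE c : (c \in Ess p ++ Ess q) = (c \in Ess q ++ Ess p) by rewrite !mem_cat orbC.
exists B, A, (map swap_letter w); split => //; first by case: hext.
- exact: reduced_swap_letter.
- by case: hinf.
- by case: hdom.
exists b, (map swap_letter v); split; first by rewrite ew.
split.
- by move=> c; rewrite memE eval_swap_letter; exact: hdef.
- move=> m hm m_min d; rewrite eval_swap_letter; apply: hmin; first by rewrite -memE.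
  by move=> c; rewrite -memE; exact: m_min.
- by exists a; split => // c d; rewrite memE eval_swap_letter; exact: ha.
Qed.

Theorem lemma3p6 (p q : pisom) :
  elementary p q ->
  (exists (p' q' : pisom) (w : word), liberates_p p q p' q' w) /\
  (exists (p' q' : pisom) (w : word), liberates_q p q p' q' w).
Proof. by move=> h; split; [exact: liberates_p_exists | exact: liberates_q_exists]. Qed.
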